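(* Let $t>0$ and $\beta>1$. Then the function $h\mapsto\tilde l(t,\beta,h)$ is strictly convex and monotone decreasing on $(0,1]$, and \[ \tilde l_h(t,\beta,h)=\sqrt{1-\tilde\sigma^2(t,\beta,h)}+\tilde\sigma(t,\beta,h)-\sqrt2 . \]
   Context: For $t\ge 0$ let $q(t)=\lfloor t+1\rfloor/2$ if $\lfloor t\rfloor$ is odd and $q(t)=t-\lfloor t\rfloor/2$ if $\lfloor t\rfloor$ is even. For $0<h\le1$ let $p(t,h)=t+h-q(t)$. For $\beta>1$ let $\tilde\sigma(t,\beta,h)\in(0,1)$ be the unique solution $\sigma$ of $\frac{p(t,h)\sigma}{\sqrt{1-\sigma^2}}+\frac{q(t)\sigma}{\sqrt{\beta^2-\sigma^2}}=h$, and \[ \tilde l(t,\beta,h)=\frac{p(t,h)}{\sqrt{1-\tilde\sigma^2}}+\frac{\beta^2q(t)}{\sqrt{\beta^2-\tilde\sigma^2}}-t-h\sqrt2,\qquad\tilde\sigma=\tilde\sigma(t,\beta,h); \] $\tilde l_h$ denotes the partial derivative with respect to $h$. *)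

From Stdlib Require Import Reals Lra ZArith ClassicalEpsilon.
From Coquelicot Require Import Coquelicot.
Open Scope R_scope.

Definition fl (t : R) : Z := Int_part t.

Definition q (t : R) : R :=
  if Z.odd (fl t) then IZR (Int_part (t + 1)) / 2
  else t - IZR (fl t) / 2.

Definition p (t h : R) : R := t + h - q t.

Definition sigma_eq (t beta h s : R) : R :=
  p t h * s / sqrt (1 - s ^ 2) + q t * s / sqrt (beta ^ 2 - s ^ 2).

(* sigma tilde(t,beta,h): the (unique) solution sigma in (0,1) of
   sigma_eq t beta h sigma = h, chosen by Hilbert's epsilon. *)
Definition sigmat (t beta h : R) : R :=
  epsilon (inhabits 0)
    (fun s => 0 < s < 1 /\ sigma_eq t beta h s = h).

Definition lt_ (t beta h : R) : R :=
  let s := sigmat t beta h in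
  p t h / sqrt (1 - s ^ 2) + beta ^ 2 * q t / sqrt (beta ^ 2 - s ^ 2)
  - t - h * sqrt 2.

From Stdlib Require Import Reals Lra Lia Psatz ZArith ClassicalEpsilon.
From Stdlib Require Ranalysis5.
From Coquelicot Require Import Coquelicot.
Open Scope R_scope.

(* For fixed [x], [lt_minorant t beta x h] is affine in [h] with slope
   [lt_slope x = sqrt (1 - x^2) + x - sqrt 2 <= 0].  Writing [s] for [sigmat t beta h]
   and substituting the defining equation of [s] for [h] in the term [x h],
   [lt_ h - lt_minorant x h] becomes a positive combination of the two Cauchy-Schwarz
   gaps between the vectors [(sqrt (c - s^2), s)] and [(sqrt (c - x^2), x)], for
   [c = 1] and [c = beta^2].  Hence [lt_] is the upper envelope of these affine
   functions, touched only at [x = s]: [lt_slope s] is a subgradient at [h], strict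
   because [sigmat] is injective.  This gives monotonicity and strict convexity;
   finally [sigmat] is Lipschitz, so the subgradient is continuous and is the derivative. *)

Lemma strict_convex_of_strict_subgradient (f g : R -> R) (a : R) :
  (forall x y, a < x -> a < y -> x <> y -> f x + (y - x) * g x < f y) ->
  forall x y lam, a < x -> a < y -> x <> y -> 0 < lam < 1 ->
  f (lam * x + (1 - lam) * y) < lam * f x + (1 - lam) * f y.
Proof.
  intros hsub x y lam hx hy nxy hlam.
  set (z := lam * x + (1 - lam) * y).
  assert (hz : a < z) by (unfold z; nra).
  assert (zx : z <> x) by (unfold z; intro E; apply nxy; nra).
  assert (zy : z <> y) by (unfold z; intro E; apply nxy; nra).
  pose proof (hsub z x hz hx zx) as Sx.
  pose proof (hsub z y hz hy zy) as Sy.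
  apply Rmult_lt_compat_l with (r := lam) in Sx; [|lra].
  apply Rmult_lt_compat_l with (r := 1 - lam) in Sy; [|lra].
  assert (Ez : lam * (x - z) + (1 - lam) * (y - z) = 0) by (unfold z; ring).
  set (gz := g z) in *.
  replace (f z) with (lam * (f z + (x - z) * gz) + (1 - lam) * (f z + (y - z) * gz))
    by (transitivity (f z + (lam * (x - z) + (1 - lam) * (y - z)) * gz); [ring| rewrite Ez; ring]).
  lra.
Qed.

Section Subgradient.

Variables (f g : R -> R) (a : R).
Hypothesis subgradient : forall x y, a < x -> a < y -> f x + (y - x) * g x <= f y.

Lemma nonincreasing_of_nonpos_subgradient :
  (forall x, a < x -> g x <= 0) -> forall x y, a < x -> x <= y -> f y <= f x.
Proof.
  intros hg x y hx hxy.
  pose proof (subgradient y x ltac:(lra) hx). pose proof (hg y ltac:(lra)). nra.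
Qed.

Lemma is_derive_of_continuous_subgradient x :
  a < x -> continuity_pt g x -> is_derive f x (g x).
Proof.
  intros hx hg. apply is_derive_Reals. intros eps heps.
  destruct (hg eps heps) as [alp [halp Halp]].
  assert (hdelta : 0 < Rmin (x - a) alp) by (apply Rmin_pos; lra).
  exists (mkposreal _ hdelta). simpl. intros h0 nz habs.
  assert (h1 : Rabs h0 < x - a) by (eapply Rlt_le_trans; [exact habs| apply Rmin_l]).
  assert (h2 : Rabs h0 < alp) by (eapply Rlt_le_trans; [exact habs| apply Rmin_r]).
  assert (hy : a < x + h0) by (apply Rabs_def2 in h1; lra).
  assert (lo := subgradient x (x + h0) hx hy).
  assert (hi := subgradient (x + h0) x hy hx).
  assert (herr : Rabs (f (x + h0) - f x - h0 * g x) <= Rabs h0 * Rabs (g (x + h0) - g x)).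
  { rewrite <- Rabs_mult, Rabs_pos_eq by lra.
    eapply Rle_trans; [|apply RRle_abs]. lra. }
  assert (hgy : Rabs (g (x + h0) - g x) < eps).
  { apply (Halp (x + h0)). split; [split; [exact I| lra]|].
    simpl; unfold R_dist. replace (x + h0 - x) with h0 by ring. exact h2. }
  assert (hh0 : 0 < Rabs h0) by (apply Rabs_pos_lt; exact nz).
  replace ((f (x + h0) - f x) / h0 - g x) with ((f (x + h0) - f x - h0 * g x) / h0)
    by (field; exact nz).
  rewrite Rabs_div by exact nz.
  apply Rmult_lt_reg_r with (Rabs h0); [exact hh0|].
  unfold Rdiv. rewrite Rmult_assoc, Rinv_l by lra. nra.
Qed.

End Subgradient.

Lemma q_pos_le t : 0 < t -> 0 < q t <= t.
Proof.
  intros ht. unfold q, fl.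
  destruct (base_Int_part t) as [H1 H2].
  assert (hk : (-1 < Int_part t)%Z) by (apply lt_IZR; simpl; lra).
  destruct (Z.odd (Int_part t)) eqn:Hodd.
  - destruct (base_Int_part (t + 1)) as [H3 H4].
    assert (e1 : (Int_part (t + 1) < Int_part t + 2)%Z)
      by (apply lt_IZR; rewrite plus_IZR; simpl; lra).
    assert (e2 : (Int_part t < Int_part (t + 1))%Z) by (apply lt_IZR; lra).
    assert (e : Int_part (t + 1) = (Int_part t + 1)%Z) by lia.
    assert (k1 : (1 <= Int_part t)%Z).
    { destruct (Z.eq_dec (Int_part t) 0) as [E|E]; [rewrite E in Hodd; discriminate| lia]. }
    apply IZR_le in k1. rewrite e, plus_IZR. simpl in *. lra.
  - assert (k0 : (0 <= Int_part t)%Z) by lia. apply IZR_le in k0. simpl in *. lra.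
Qed.

Lemma p_ge t h : 0 < t -> h <= p t h.
Proof. intros ht. unfold p. destruct (q_pos_le t ht). lra. Qed.

Lemma p_shift t x y : p t y = p t x + (y - x).
Proof. unfold p. ring. Qed.

Definition tan_of_sin (c s : R) : R := s / sqrt (c - s ^ 2).

Lemma tan_of_sin_nonneg c s : 0 <= s -> 0 <= tan_of_sin c s.
Proof.
  intros hs. unfold tan_of_sin, Rdiv. apply Rmult_le_pos; [exact hs|].
  destruct (Req_dec (sqrt (c - s ^ 2)) 0) as [E|E].
  - rewrite E, Rinv_0. lra.
  - left. apply Rinv_0_lt_compat. pose proof (sqrt_pos (c - s ^ 2)). lra.
Qed.

Lemma tan_of_sin_le c s s' :
  0 <= s <= s' -> s' ^ 2 < c -> tan_of_sin c s <= tan_of_sin c s'.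
Proof.
  intros hs hs'. unfold tan_of_sin, Rdiv.
  assert (hB : 0 < sqrt (c - s' ^ 2)) by (apply sqrt_lt_R0; lra).
  assert (hBA : sqrt (c - s' ^ 2) <= sqrt (c - s ^ 2)) by (apply sqrt_le_1_alt; nra).
  apply Rmult_le_compat; try lra.
  - left. apply Rinv_0_lt_compat. lra.
  - apply Rinv_le_contravar; lra.
Qed.

(* [tan_of_sin 1 s - s = s (1 - cos) / cos] is a product of nonnegative nondecreasing factors. *)
Lemma tan_of_sin_sub_le s s' :
  0 <= s <= s' -> s' < 1 -> s' - s <= tan_of_sin 1 s' - tan_of_sin 1 s.
Proof.
  intros hs hs1. unfold tan_of_sin.
  set (A := sqrt (1 - s ^ 2)). set (B := sqrt (1 - s' ^ 2)).
  assert (hB : 0 < B) by (apply sqrt_lt_R0; nra).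
  assert (hBA : B <= A) by (apply sqrt_le_1_alt; nra).
  assert (hA1 : A <= 1) by (rewrite <- sqrt_1; apply sqrt_le_1_alt; nra).
  assert (E : forall u C, 0 < C -> u / C - u = u * (1 - C) * / C)
    by (intros; field; lra).
  enough (s * (1 - A) * / A <= s' * (1 - B) * / B)
    by (pose proof (E s A ltac:(lra)); pose proof (E s' B hB); lra).
  apply Rmult_le_compat; try lra.
  - apply Rmult_le_pos; lra.
  - left. apply Rinv_0_lt_compat. lra.
  - apply Rmult_le_compat; lra.
  - apply Rinv_le_contravar; lra.
Qed.

Definition circle_gap (c s x : R) : R :=
  c - (sqrt (c - s ^ 2) * sqrt (c - x ^ 2) + x * s).

Lemma circle_gap_self c s : s ^ 2 <= c -> circle_gap c s s = 0.
Proof.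
  intros hs. unfold circle_gap. rewrite sqrt_sqrt by lra. ring.
Qed.

(* Cauchy-Schwarz for [(sqrt (c - s^2), s)] and [(sqrt (c - x^2), x)], both of norm [sqrt c]. *)
Lemma circle_gap_pos c s x :
  0 <= s -> 0 <= x -> s ^ 2 <= c -> x ^ 2 <= c -> x <> s -> 0 < circle_gap c s x.
Proof.
  intros hs hx hsc hxc nxs. unfold circle_gap.
  assert (ea : sqrt (c - s ^ 2) * sqrt (c - s ^ 2) = c - s ^ 2) by (apply sqrt_sqrt; lra).
  assert (ed : sqrt (c - x ^ 2) * sqrt (c - x ^ 2) = c - x ^ 2) by (apply sqrt_sqrt; lra).
  pose proof (sqrt_pos (c - s ^ 2)). pose proof (sqrt_pos (c - x ^ 2)).
  set (a := sqrt (c - s ^ 2)) in *. set (d := sqrt (c - x ^ 2)) in *.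
  assert (Id : (a * d + x * s) ^ 2 + (a * x - d * s) ^ 2 = c ^ 2)
    by (transitivity ((a * a + s ^ 2) * (d * d + x ^ 2)); [ring| rewrite ea, ed; ring]).
  apply Rnot_le_lt. intros hge.
  assert (hdot : 0 <= a * d + x * s) by nra.
  assert (hperp : a * x = d * s) by nra.
  assert (hc : c * (x ^ 2 - s ^ 2) = 0)
    by (transitivity ((a * a + s ^ 2) * x ^ 2 - (d * d + x ^ 2) * s ^ 2);
        [rewrite ea, ed; ring|
         replace ((a * a + s ^ 2) * x ^ 2 - (d * d + x ^ 2) * s ^ 2)
           with ((a * x) * (a * x) - (d * s) * (d * s)) by ring;
         rewrite hperp; ring]).
  apply nxs. apply Rmult_integral in hc as [hc| hc]; [nra|].
  assert (hxs : (x - s) * (x + s) = 0) by nra.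
  apply Rmult_integral in hxs as [hxs| hxs]; lra.
Qed.

Definition lt_slope (s : R) : R := sqrt (1 - s ^ 2) + s - sqrt 2.

Definition lt_minorant (t beta x h : R) : R :=
  p t h * sqrt (1 - x ^ 2) + q t * sqrt (beta ^ 2 - x ^ 2) + x * h - t - h * sqrt 2.

Lemma lt_minorant_affine t beta x h h' :
  lt_minorant t beta x h' = lt_minorant t beta x h + (h' - h) * lt_slope x.
Proof. unfold lt_minorant, lt_slope, p. ring. Qed.

Lemma lt_slope_nonpos s : s ^ 2 <= 1 -> lt_slope s <= 0.
Proof.
  intros hs. unfold lt_slope.
  assert (ea : sqrt (1 - s ^ 2) * sqrt (1 - s ^ 2) = 1 - s ^ 2) by (apply sqrt_sqrt; lra).
  set (a := sqrt (1 - s ^ 2)) in *.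
  pose proof (sqrt_pos 2).
  destruct (Rle_or_lt (a + s) 0) as [hneg| hpos]; [lra|].
  enough (a + s <= sqrt 2) by lra.
  rewrite <- (sqrt_pow2 (a + s)) by lra. apply sqrt_le_1_alt.
  pose proof (pow2_ge_0 (a - s)). nra.
Qed.

Lemma lt_slope_continuous s : s ^ 2 < 1 -> continuity_pt lt_slope s.
Proof.
  intros hs. apply continuity_pt_filterlim, (ex_derive_continuous lt_slope).
  unfold lt_slope. auto_derive. simpl in hs. lra.
Qed.

Section SigmaTilde.

Variables t beta : R.
Hypotheses (ht : 0 < t) (hbeta : 1 < beta).

Lemma sigma_eq_tan h s :
  sigma_eq t beta h s = p t h * tan_of_sin 1 s + q t * tan_of_sin (beta ^ 2) s.
Proof. unfold sigma_eq, tan_of_sin, Rdiv. ring. Qed.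

Lemma sigma_eq_solvable h : 0 < h -> exists s, 0 < s < 1 /\ sigma_eq t beta h s = h.
Proof.
  intros hh.
  destruct (q_pos_le t ht) as [hq _]. pose proof (p_ge t h ht) as hp.
  set (c := sqrt (1 / 2)).
  assert (hc2 : c * c = 1 / 2) by (apply sqrt_sqrt; lra).
  assert (hc : 0 < c) by (apply sqrt_lt_R0; lra).
  assert (cont : forall s, 0 <= s <= c -> continuity_pt (fun s => sigma_eq t beta h s - h) s).
  { intros s hs. apply continuity_pt_filterlim.
    apply (ex_derive_continuous (fun s => sigma_eq t beta h s - h)).
    unfold sigma_eq. auto_derive.
    assert (0 < sqrt (1 + - (s * (s * 1)))) by (apply sqrt_lt_R0; nra).
    assert (0 < sqrt (beta * (beta * 1) + - (s * (s * 1)))) by (apply sqrt_lt_R0; nra).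
    repeat split; try lra; nra. }
  (* at [c = 1/sqrt 2] the [p]-term of the equation alone equals [p t h >= h] *)
  destruct (Ranalysis5.IVT_interv _ 0 c cont hc) as [z [hz Ez]].
  - unfold sigma_eq. rewrite !Rmult_0_r, !Rdiv_0_l. lra.
  - assert (hc1 : tan_of_sin 1 c = 1).
    { unfold tan_of_sin. replace (1 - c ^ 2) with (c * c) by (simpl; lra).
      rewrite sqrt_square by lra. field. lra. }
    assert (hc' : 0 < tan_of_sin (beta ^ 2) c).
    { unfold tan_of_sin. apply Rdiv_lt_0_compat; [lra|]. apply sqrt_lt_R0. simpl. nra. }
    rewrite sigma_eq_tan, hc1. nra.
  - exists z. split; [|lra].
    destruct (Req_dec z 0) as [E|E].
    + subst z. unfold sigma_eq in Ez. rewrite !Rmult_0_r, !Rdiv_0_l in Ez. lra.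
    + nra.
Qed.

Lemma sigmat_spec h : 0 < h -> 0 < sigmat t beta h < 1 /\ sigma_eq t beta h (sigmat t beta h) = h.
Proof. intros hh. unfold sigmat. apply epsilon_spec, sigma_eq_solvable, hh. Qed.

(* The [q]-term of the defining equation is positive while [p t h >= h]. *)
Lemma tan_of_sin_sigmat_lt_1 h : 0 < h -> tan_of_sin 1 (sigmat t beta h) < 1.
Proof.
  intros hh. destruct (sigmat_spec h hh) as [hs E].
  destruct (q_pos_le t ht) as [hq _]. pose proof (p_ge t h ht) as hp.
  assert (hu : 0 < tan_of_sin (beta ^ 2) (sigmat t beta h)).
  { unfold tan_of_sin. apply Rdiv_lt_0_compat; [lra|]. apply sqrt_lt_R0. simpl. nra. }
  rewrite sigma_eq_tan in E. nra.
Qed.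

Lemma lt_sub_minorant h x : 0 < h ->
  let s := sigmat t beta h in
  lt_ t beta h - lt_minorant t beta x h =
  p t h / sqrt (1 - s ^ 2) * circle_gap 1 s x
  + q t / sqrt (beta ^ 2 - s ^ 2) * circle_gap (beta ^ 2) s x.
Proof.
  intros hh s. destruct (sigmat_spec h hh) as [hs E]. fold s in hs, E.
  assert (ha : 0 < sqrt (1 - s ^ 2)) by (apply sqrt_lt_R0; nra).
  assert (hb : 0 < sqrt (beta ^ 2 - s ^ 2)) by (apply sqrt_lt_R0; simpl; nra).
  unfold lt_, lt_minorant, circle_gap. fold s.
  replace (x * h) with (x * sigma_eq t beta h s) by (rewrite E; reflexivity).
  unfold sigma_eq. field. lra.
Qed.

Lemma lt_eq_minorant h : 0 < h -> lt_ t beta h = lt_minorant t beta (sigmat t beta h) h.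
Proof.
  intros hh. pose proof (lt_sub_minorant h (sigmat t beta h) hh) as E. cbv zeta in E.
  destruct (sigmat_spec h hh) as [hs _].
  rewrite !circle_gap_self in E by nra. lra.
Qed.

Lemma lt_minorant_lt h x : 0 < h -> 0 <= x < 1 -> x <> sigmat t beta h ->
  lt_minorant t beta x h < lt_ t beta h.
Proof.
  intros hh hx nx. pose proof (lt_sub_minorant h x hh) as E. cbv zeta in E.
  destruct (sigmat_spec h hh) as [hs _].
  set (s := sigmat t beta h) in *.
  destruct (q_pos_le t ht) as [hq _]. pose proof (p_ge t h ht) as hp.
  assert (ha : 0 < sqrt (1 - s ^ 2)) by (apply sqrt_lt_R0; nra).
  assert (hb : 0 < sqrt (beta ^ 2 - s ^ 2)) by (apply sqrt_lt_R0; simpl; nra).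
  assert (g1 : 0 < circle_gap 1 s x) by (apply circle_gap_pos; nra).
  assert (g2 : 0 < circle_gap (beta ^ 2) s x) by (apply circle_gap_pos; simpl; nra).
  assert (0 < p t h / sqrt (1 - s ^ 2) * circle_gap 1 s x)
    by (apply Rmult_lt_0_compat; [apply Rdiv_lt_0_compat|]; lra).
  assert (0 < q t / sqrt (beta ^ 2 - s ^ 2) * circle_gap (beta ^ 2) s x)
    by (apply Rmult_lt_0_compat; [apply Rdiv_lt_0_compat|]; lra).
  lra.
Qed.

Lemma lt_subgradient x y : 0 < x -> 0 < y ->
  lt_ t beta x + (y - x) * lt_slope (sigmat t beta x) <= lt_ t beta y.
Proof.
  intros hx hy.
  rewrite (lt_eq_minorant x hx), <- lt_minorant_affine.
  destruct (Req_dec (sigmat t beta x) (sigmat t beta y)) as [E| nE].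
  - rewrite E, <- (lt_eq_minorant y hy). lra.
  - left. apply lt_minorant_lt; [exact hy| |exact nE].
    destruct (sigmat_spec x hx). lra.
Qed.

(* With [s] fixed, [sigma_eq t beta h s - h] is affine in [h] with slope [tan_of_sin 1 s - 1 < 0]. *)
Lemma sigmat_inj x y : 0 < x -> 0 < y -> sigmat t beta x = sigmat t beta y -> x = y.
Proof.
  intros hx hy E.
  pose proof (tan_of_sin_sigmat_lt_1 x hx) as hlt.
  destruct (sigmat_spec x hx) as [_ Ex].
  destruct (sigmat_spec y hy) as [_ Ey].
  rewrite <- E, sigma_eq_tan in Ey. rewrite sigma_eq_tan in Ex.
  rewrite (p_shift t x y) in Ey.
  assert (Z : (y - x) * (1 - tan_of_sin 1 (sigmat t beta x)) = 0) by lra.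
  apply Rmult_integral in Z as [Z| Z]; lra.
Qed.

Lemma lt_strict_subgradient x y : 0 < x -> 0 < y -> x <> y ->
  lt_ t beta x + (y - x) * lt_slope (sigmat t beta x) < lt_ t beta y.
Proof.
  intros hx hy nxy.
  rewrite (lt_eq_minorant x hx), <- lt_minorant_affine.
  apply lt_minorant_lt; [exact hy| |].
  - destruct (sigmat_spec x hx). lra.
  - intros E. apply nxy, sigmat_inj; assumption.
Qed.

Lemma sigmat_lipschitz x y : 0 < x -> 0 < y ->
  p t x * Rabs (sigmat t beta y - sigmat t beta x) <= Rabs (y - x).
Proof.
  intros hx hy.
  destruct (sigmat_spec x hx) as [hs Ex].
  destruct (sigmat_spec y hy) as [hs' Ey].
  pose proof (tan_of_sin_sigmat_lt_1 y hy) as hr'1.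
  rewrite sigma_eq_tan in Ex, Ey. rewrite (p_shift t x y) in Ey.
  destruct (q_pos_le t ht) as [hq _]. pose proof (p_ge t x ht) as hp.
  set (s := sigmat t beta x) in *. set (s' := sigmat t beta y) in *.
  set (r := tan_of_sin 1 s) in *. set (r' := tan_of_sin 1 s') in *.
  set (u := tan_of_sin (beta ^ 2) s) in *. set (u' := tan_of_sin (beta ^ 2) s') in *.
  assert (hr' : 0 <= r') by (apply tan_of_sin_nonneg; lra).
  assert (Id : (y - x) * (1 - r') = p t x * (r' - r) + q t * (u' - u)) by lra.
  assert (mono : (s' - s) ^ 2 <= (r' - r) * (s' - s) /\ 0 <= (u' - u) * (s' - s)).
  { assert (hb : forall z, 0 < z < 1 -> z ^ 2 < beta ^ 2) by (intros; simpl; nra).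
    destruct (Rle_or_lt s s') as [le| lt].
    - pose proof (tan_of_sin_sub_le s s' ltac:(lra) ltac:(lra)) as H1.
      pose proof (tan_of_sin_le (beta ^ 2) s s' ltac:(lra) (hb s' hs')) as H2.
      fold r r' u u' in H1, H2. split; nra.
    - pose proof (tan_of_sin_sub_le s' s ltac:(lra) ltac:(lra)) as H1.
      pose proof (tan_of_sin_le (beta ^ 2) s' s ltac:(lra) (hb s hs)) as H2.
      fold r r' u u' in H1, H2. split; nra. }
  assert (key : p t x * (s' - s) ^ 2 <= (y - x) * (s' - s) * (1 - r')) by nra.
  assert (hsign : 0 <= (y - x) * (s' - s)).
  { apply Rmult_le_reg_r with (1 - r'); [lra|]. pose proof (pow2_ge_0 (s' - s)). nra. }
  assert (hprod : (y - x) * (s' - s) <= Rabs (y - x) * Rabs (s' - s))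
    by (rewrite <- Rabs_mult; apply RRle_abs).
  destruct (Req_dec s' s) as [E| nE].
  - rewrite E, Rminus_diag, Rabs_R0, Rmult_0_r. apply Rabs_pos.
  - assert (hd : 0 < Rabs (s' - s)) by (apply Rabs_pos_lt; lra).
    apply Rmult_le_reg_r with (Rabs (s' - s)); [exact hd|].
    replace (p t x * Rabs (s' - s) * Rabs (s' - s)) with (p t x * (s' - s) ^ 2)
      by (rewrite <- pow2_abs; ring).
    nra.
Qed.

Lemma sigmat_continuous h : 0 < h -> continuity_pt (sigmat t beta) h.
Proof.
  intros hh eps heps. pose proof (p_ge t h ht) as hp.
  exists (Rmin h (eps * p t h)). split.
  - apply Rmin_pos; nra.
  - intros y [_ hy]. simpl in *. unfold R_dist in *.
    assert (hy1 : Rabs (y - h) < h) by (eapply Rlt_le_trans; [exact hy| apply Rmin_l]).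
    assert (hy2 : Rabs (y - h) < eps * p t h) by (eapply Rlt_le_trans; [exact hy| apply Rmin_r]).
    assert (hy0 : 0 < y) by (apply Rabs_def2 in hy1; lra).
    pose proof (sigmat_lipschitz h y hh hy0).
    apply Rmult_lt_reg_l with (p t h); nra.
Qed.

End SigmaTilde.

Theorem lemma3p17 (t beta : R) (ht : 0 < t) (hbeta : 1 < beta) :
  (forall x y lam, 0 < x <= 1 -> 0 < y <= 1 -> x <> y -> 0 < lam < 1 ->
     lt_ t beta (lam * x + (1 - lam) * y)
     < lam * lt_ t beta x + (1 - lam) * lt_ t beta y) /\
  (forall x y, 0 < x <= 1 -> 0 < y <= 1 -> x <= y ->
     lt_ t beta y <= lt_ t beta x) /\
  (forall h, 0 < h <= 1 ->
     is_derive (fun h' => lt_ t beta h') h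
       (sqrt (1 - sigmat t beta h ^ 2) + sigmat t beta h - sqrt 2)).
Proof.
  set (slope := fun h => lt_slope (sigmat t beta h)).
  assert (hsub : forall x y, 0 < x -> 0 < y -> lt_ t beta x + (y - x) * slope x <= lt_ t beta y)
    by exact (lt_subgradient t beta ht hbeta).
  split; [|split].
  - intros x y lam hx hy nxy hlam.
    apply (strict_convex_of_strict_subgradient _ slope 0); try lra.
    exact (lt_strict_subgradient t beta ht hbeta).
  - intros x y hx hy hxy.
    apply (nonincreasing_of_nonpos_subgradient _ slope 0 hsub); try lra.
    intros h hh. apply lt_slope_nonpos.
    destruct (sigmat_spec t beta ht hbeta h hh). nra.
  - intros h hh.
    apply (is_derive_of_continuous_subgradient _ slope 0 hsub); [lra|].
    destruct (sigmat_spec t beta ht hbeta h ltac:(lra)).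
    apply (continuity_pt_comp (sigmat t beta) lt_slope).
    + apply sigmat_continuous; lra.
    + apply lt_slope_continuous. nra.
Qed.
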